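(* Let $x\in M_1$ be ap-chain recurrent. Then $\overline{[x]_{ap}}\subset M_0\cup[x]_{ap}$. In particular, if $\overline{[x]_{ap}}\subset M_1$ then $[x]_{ap}$ is closed.
   Context: Let $M\subset\mathbb{R}^d$ be closed (topology relative to $M$). Let $F:M\to M$ be continuous with $\sup_{x\in M}\|F(x)\|<\infty$. Let $d(x,y)=\max_i|x_i-y_i|$. Suppose $M=M_0\cup M_1$ (disjoint) with $M_0$ closed, $F(M_0)\subseteq M_0$ and $F(M_1)\subseteq M_1$. ap-chain recurrence. For $\delta>0$, an ap $\delta$-pseudoorbit joining $x$ to $y$ is a tuple $(\xi_0,\dots,\xi_n)\in M^{n+1}$, $n\ge1$, with: - $\xi_0=x$ and $\xi_n=y$; - $\xi_i\in M_0\Rightarrow\xi_{i+1}\in M_0$; - $d(\xi_{i+1},F(\xi_i))<\delta$ for all $i$. Write $x<_{ap}y$ if for every $\delta>0$ such a pseudoorbit exists, and $x\sim_{ap}y$ if $x<_{ap}y$ and $y<_{ap}x$. A point $x$ is ap-chain recurrent if $x\sim_{ap}x$. The set of such points is $\mathcal{R}_{ap}$. The ap-basic class $[x]_{ap}$ of $x\in\mathcal{R}_{ap}$ is its equivalence class under $\sim_{ap}$ restricted to $\mathcal{R}_{ap}$. *)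

From Stdlib Require Import Reals Lra.
From Stdlib Require Vectors.Fin.
Open Scope R_scope.

Definition Vec (d : nat) : Type := Fin.t d -> R.

Fixpoint vmax (d : nat) : (Fin.t d -> R) -> R :=
  match d return (Fin.t d -> R) -> R with
  | O => fun _ => 0
  | S n => fun f => Rmax (f Fin.F1) (vmax n (fun i => f (Fin.FS i)))
  end.

Definition vdist {d : nat} (x y : Vec d) : R := vmax d (fun i => Rabs (x i - y i)).

Definition zeroV (d : nat) : Vec d := fun _ => 0.

Definition closure {d : nat} (S : Vec d -> Prop) (y : Vec d) : Prop :=
  forall eps, 0 < eps -> exists z, S z /\ vdist y z < eps.

Definition is_closed {d : nat} (S : Vec d -> Prop) : Prop :=
  forall y, closure S y -> S y.

Definition rel_closed {d : nat} (M S : Vec d -> Prop) : Prop :=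
  forall y, M y -> closure S y -> S y.

Definition continuous_on {d : nat} (M : Vec d -> Prop) (F : Vec d -> Vec d) : Prop :=
  forall x, M x -> forall eps, 0 < eps -> exists delta, 0 < delta /\
    forall y, M y -> vdist x y < delta -> vdist (F x) (F y) < eps.

Definition ap_pseudoorbit {d : nat} (M M0 : Vec d -> Prop) (F : Vec d -> Vec d)
    (delta : R) (x y : Vec d) : Prop :=
  exists (n : nat) (xi : nat -> Vec d),
    (1 <= n)%nat /\ xi O = x /\ xi n = y /\
    (forall i, (i <= n)%nat -> M (xi i)) /\
    (forall i, (i < n)%nat -> M0 (xi i) -> M0 (xi (S i))) /\
    (forall i, (i < n)%nat -> vdist (xi (S i)) (F (xi i)) < delta).

Definition ap_lt {d : nat} (M M0 : Vec d -> Prop) (F : Vec d -> Vec d) (x y : Vec d) : Prop :=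
  forall delta, 0 < delta -> ap_pseudoorbit M M0 F delta x y.

Definition ap_equiv {d : nat} (M M0 : Vec d -> Prop) (F : Vec d -> Vec d) (x y : Vec d) : Prop :=
  ap_lt M M0 F x y /\ ap_lt M M0 F y x.

Definition ap_rec {d : nat} (M M0 : Vec d -> Prop) (F : Vec d -> Vec d) (x : Vec d) : Prop :=
  M x /\ ap_equiv M M0 F x x.

Definition ap_class {d : nat} (M M0 : Vec d -> Prop) (F : Vec d -> Vec d) (x y : Vec d) : Prop :=
  ap_rec M M0 F y /\ ap_equiv M M0 F x y.

(* If y is a limit of points z ~ x and y lies outside M0, then so do the z (M0 is
   forward invariant along ap-chains and x is in M1), so the last jump of an
   ap-chain from x to z may land at y instead, which gives x < y.  In the other
   direction, continuity of F at y lets an ap-chain from z to x start at y instead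
   of z, which gives y < x.  Points of the closure in M0 are the only ones this
   argument cannot reach. *)
From Stdlib Require Import Reals.
From Stdlib Require Import Lra Lia Arith Classical.
Open Scope R_scope.

Lemma vmax_nonneg (n : nat) (f : Fin.t n -> R) :
  (forall i, 0 <= f i) -> 0 <= vmax n f.
Proof.
  induction n as [|n IHn]; simpl; intros Hf; [lra|].
  pose proof (IHn (fun i => f (Fin.FS i)) (fun i => Hf (Fin.FS i))).
  pose proof (Hf Fin.F1).
  unfold Rmax; destruct Rle_dec; lra.
Qed.

Lemma vmax_le (n : nat) (f g : Fin.t n -> R) :
  (forall i, f i <= g i) -> vmax n f <= vmax n g.
Proof.
  induction n as [|n IHn]; simpl; intros Hfg; [lra|].
  pose proof (IHn (fun i => f (Fin.FS i)) (fun i => g (Fin.FS i)) (fun i => Hfg (Fin.FS i))).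
  pose proof (Hfg Fin.F1).
  unfold Rmax; repeat destruct Rle_dec; lra.
Qed.

Lemma vmax_add (n : nat) (f g h : Fin.t n -> R) :
  (forall i, f i <= g i + h i) -> vmax n f <= vmax n g + vmax n h.
Proof.
  induction n as [|n IHn]; simpl; intros Hfgh; [lra|].
  pose proof (IHn (fun i => f (Fin.FS i)) (fun i => g (Fin.FS i)) (fun i => h (Fin.FS i))
     (fun i => Hfgh (Fin.FS i))).
  pose proof (Hfgh Fin.F1).
  unfold Rmax; repeat destruct Rle_dec; lra.
Qed.

Lemma vdist_nonneg {d} (a b : Vec d) : 0 <= vdist a b.
Proof. apply vmax_nonneg; intro i; apply Rabs_pos. Qed.

Lemma vdist_triangle {d} (a b c : Vec d) : vdist a c <= vdist a b + vdist b c.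
Proof.
  apply vmax_add; intro i.
  replace (a i - c i) with ((a i - b i) + (b i - c i)) by ring.
  apply Rabs_triang.
Qed.

Lemma vdist_sym {d} (a b : Vec d) : vdist a b = vdist b a.
Proof.
  apply Rle_antisym; apply vmax_le; intro i; rewrite Rabs_minus_sym; lra.
Qed.

Section Pseudoorbits.

Variables (d : nat) (M M0 : Vec d -> Prop) (F : Vec d -> Vec d).

Lemma ap_pseudoorbit_trans delta a b c :
  ap_pseudoorbit M M0 F delta a b -> ap_pseudoorbit M M0 F delta b c ->
  ap_pseudoorbit M M0 F delta a c.
Proof.
  intros [n1 [xi1 [Hn1 [H0 [Hend [HM [HM0 Hstep]]]]]]]
         [n2 [xi2 [Gn2 [G0 [Gend [GM [GM0 Gstep]]]]]]].
  exists (n1 + n2)%nat, (fun i => if le_lt_dec i n1 then xi1 i else xi2 (i - n1)%nat).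
  split; [| split; [| split; [| split; [| split]]]].
  - lia.
  - destruct le_lt_dec; [assumption | lia].
  - destruct le_lt_dec; [lia |].
    replace (n1 + n2 - n1)%nat with n2 by lia; assumption.
  - intros i Hi; destruct le_lt_dec; [apply HM | apply GM]; lia.
  - intros i Hi; destruct (le_lt_dec i n1), (le_lt_dec (S i) n1); try lia.
    + apply HM0; lia.
    + assert (i = n1) by lia; subst i.
      replace (S n1 - n1)%nat with 1%nat by lia.
      rewrite Hend, <- G0; apply GM0; lia.
    + replace (S i - n1)%nat with (S (i - n1)) by lia; apply GM0; lia.
  - intros i Hi; destruct (le_lt_dec i n1), (le_lt_dec (S i) n1); try lia.
    + apply Hstep; lia.
    + assert (i = n1) by lia; subst i.
      replace (S n1 - n1)%nat with 1%nat by lia.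
      rewrite Hend, <- G0; apply Gstep; lia.
    + replace (S i - n1)%nat with (S (i - n1)) by lia; apply Gstep; lia.
Qed.

Lemma ap_pseudoorbit_M0 delta a b :
  ap_pseudoorbit M M0 F delta a b -> M0 a -> M0 b.
Proof.
  intros [n [xi [_ [H0 [Hend [_ [HM0 _]]]]]]] Ha.
  assert (Hall : forall i, (i <= n)%nat -> M0 (xi i)).
  { induction i as [|i IHi]; intros Hi; [congruence |].
    apply HM0; [lia | apply IHi; lia]. }
  rewrite <- Hend; apply Hall; lia.
Qed.

Lemma ap_pseudoorbit_perturb_last e1 e2 a z y :
  ap_pseudoorbit M M0 F e1 a z -> M y -> vdist y z < e2 -> (M0 z -> M0 y) ->
  ap_pseudoorbit M M0 F (e1 + e2) a y.
Proof.
  intros [n [xi [Hn [H0 [Hend [HM [HM0 Hstep]]]]]]] My Hyz Hzy.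
  pose proof (vdist_nonneg y z).
  exists n, (fun i => if Nat.eq_dec i n then y else xi i).
  split; [| split; [| split; [| split; [| split]]]].
  - assumption.
  - destruct Nat.eq_dec; [lia | assumption].
  - destruct Nat.eq_dec; [reflexivity | lia].
  - intros i Hi; destruct Nat.eq_dec; [assumption | apply HM; lia].
  - intros i Hi; destruct (Nat.eq_dec i n); [lia |].
    destruct (Nat.eq_dec (S i) n) as [HSi | HSi]; intros Hxi.
    + apply Hzy; rewrite <- Hend, <- HSi; apply HM0; assumption.
    + apply HM0; assumption.
  - intros i Hi; destruct (Nat.eq_dec i n); [lia |].
    pose proof (Hstep i Hi) as Hlast.
    destruct (Nat.eq_dec (S i) n) as [HSi | HSi].
    + rewrite HSi, Hend in Hlast.
      pose proof (vdist_triangle y z (F (xi i))); lra.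
    + lra.
Qed.

Lemma ap_pseudoorbit_perturb_first e1 e2 z b y :
  ap_pseudoorbit M M0 F e1 z b -> M y -> vdist (F y) (F z) < e2 -> (M0 y -> M0 z) ->
  ap_pseudoorbit M M0 F (e1 + e2) y b.
Proof.
  intros [n [xi [Hn [H0 [Hend [HM [HM0 Hstep]]]]]]] My Hyz Hyz0.
  pose proof (vdist_nonneg (F y) (F z)).
  exists n, (fun i => if Nat.eq_dec i 0 then y else xi i).
  split; [| split; [| split; [| split; [| split]]]].
  - assumption.
  - destruct Nat.eq_dec; [reflexivity | lia].
  - destruct Nat.eq_dec; [lia | assumption].
  - intros i Hi; destruct Nat.eq_dec; [assumption | apply HM; lia].
  - intros i Hi; destruct (Nat.eq_dec (S i) 0); [lia |].
    destruct (Nat.eq_dec i 0) as [-> | Hi0]; intros Hxi.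
    + apply HM0; [assumption | rewrite H0; apply Hyz0; assumption].
    + apply HM0; assumption.
  - intros i Hi; destruct (Nat.eq_dec (S i) 0); [lia |].
    pose proof (Hstep i Hi) as Hfirst.
    destruct (Nat.eq_dec i 0) as [-> | Hi0].
    + rewrite H0 in Hfirst.
      pose proof (vdist_triangle (xi 1%nat) (F z) (F y)).
      rewrite (vdist_sym (F z)) in *; lra.
    + lra.
Qed.

Lemma ap_lt_trans a b c :
  ap_lt M M0 F a b -> ap_lt M M0 F b c -> ap_lt M M0 F a c.
Proof.
  intros Hab Hbc delta Hdelta.
  apply ap_pseudoorbit_trans with b; [apply Hab | apply Hbc]; assumption.
Qed.

Lemma ap_lt_M0 a b : ap_lt M M0 F a b -> M0 a -> M0 b.
Proof.
  intros Hab; apply (ap_pseudoorbit_M0 1); apply Hab; lra.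
Qed.

End Pseudoorbits.

Lemma closure_closed_sub {d} (S T : Vec d -> Prop) y :
  is_closed T -> (forall z, S z -> T z) -> closure S y -> T y.
Proof.
  intros HT HST Hy; apply HT; intros eps Heps.
  destruct (Hy eps Heps) as [z [Sz Hyz]]; exists z; auto.
Qed.

Section ApClassClosure.

Variables (d : nat) (M M0 : Vec d -> Prop) (F : Vec d -> Vec d) (x : Vec d).
Hypothesis Hx : ~ M0 x.

Lemma ap_class_not_M0 z : ap_class M M0 F x z -> ~ M0 z.
Proof.
  intros [_ [_ Hzx]] Hz; exact (Hx (ap_lt_M0 d M M0 F z x Hzx Hz)).
Qed.

Lemma ap_lt_closure_ap_class y :
  M y -> closure (ap_class M M0 F x) y -> ap_lt M M0 F x y.
Proof.
  intros My Hy delta Hdelta.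
  destruct (Hy (delta / 2)) as [z [Hz Hyz]]; [lra |].
  replace delta with (delta / 2 + delta / 2) by field.
  apply ap_pseudoorbit_perturb_last with z; try assumption.
  - apply (proj1 (proj2 Hz)); lra.
  - intros Hz0; exfalso; exact (ap_class_not_M0 z Hz Hz0).
Qed.

Lemma closure_ap_class_ap_lt y :
  continuous_on M F -> M y -> ~ M0 y -> closure (ap_class M M0 F x) y ->
  ap_lt M M0 F y x.
Proof.
  intros HFcont My Hy0 Hy delta Hdelta.
  destruct (HFcont y My (delta / 2)) as [eta [Heta Hc]]; [lra |].
  destruct (Hy eta Heta) as [z [Hz Hyz]].
  assert (Mz : M z) by exact (proj1 (proj1 Hz)).
  replace delta with (delta / 2 + delta / 2) by field.
  apply ap_pseudoorbit_perturb_first with z; try assumption.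
  - apply (proj2 (proj2 Hz)); lra.
  - apply Hc; assumption.
  - intros Hy0'; contradiction.
Qed.

Lemma closure_ap_class_not_M0 y :
  is_closed M -> continuous_on M F -> ~ M0 y ->
  closure (ap_class M M0 F x) y -> ap_class M M0 F x y.
Proof.
  intros HM HFcont Hy0 Hy.
  assert (My : M y).
  { apply (closure_closed_sub (ap_class M M0 F x)); try assumption.
    intros z Hz; exact (proj1 (proj1 Hz)). }
  assert (Hxy : ap_lt M M0 F x y) by (apply ap_lt_closure_ap_class; assumption).
  assert (Hyx : ap_lt M M0 F y x) by (apply closure_ap_class_ap_lt; assumption).
  repeat split; try assumption; apply ap_lt_trans with x; assumption.
Qed.

End ApClassClosure.

Theorem mainTheorem3 (d : nat) (M M0 M1 : Vec d -> Prop) (F : Vec d -> Vec d)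
  (HMclosed : is_closed M)
  (HFM : forall x, M x -> M (F x))
  (HFcont : continuous_on M F)
  (HFbdd : exists B, forall x, M x -> vdist (F x) (zeroV d) <= B)
  (HM0M : forall x, M0 x -> M x)
  (HM1M : forall x, M1 x -> M x)
  (Hcover : forall x, M x -> M0 x \/ M1 x)
  (Hdisj : forall x, M0 x -> M1 x -> False)
  (HM0closed : rel_closed M M0)
  (HFM0 : forall x, M0 x -> M0 (F x))
  (HFM1 : forall x, M1 x -> M1 (F x))
  (x : Vec d) (Hx1 : M1 x) (Hxrec : ap_rec M M0 F x) :
  (forall y, closure (ap_class M M0 F x) y -> M0 y \/ ap_class M M0 F x y) /\
  ((forall y, closure (ap_class M M0 F x) y -> M1 y) -> is_closed (ap_class M M0 F x)).
Proof.
  assert (Hx0 : ~ M0 x) by (intros Hx0; exact (Hdisj x Hx0 Hx1)).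
  split.
  - intros y Hy; destruct (classic (M0 y)) as [Hy0 | Hy0]; [left; exact Hy0 | right].
    apply closure_ap_class_not_M0; assumption.
  - intros HM1 y Hy; apply closure_ap_class_not_M0; try assumption.
    intros Hy0; exact (Hdisj y Hy0 (HM1 y Hy)).
Qed.
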